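(* Let $n\ge 1$, let $X$ be uniformly distributed on $\{0,1\}^n$, and let $Y$ be the output of passing each component of $X$ independently through a binary symmetric channel with crossover probability $\alpha$ (i.e., $Y=X\oplus Z$ with $Z$ having i.i.d. Bernoulli($\alpha$) components independent of $X$). For any balanced Boolean function $f:\{0,1\}^n\to\{0,1\}$ (i.e., $\Pr(f(X)=0)=\tfrac12$) and any $\alpha$ with $\tfrac{1}{2}\left(1-\tfrac{1}{\sqrt{3}}\right)\le\alpha\le\tfrac{1}{2}$, we have \[ I(f(X);Y)\le \frac{\log(e)}{2}(1-2\alpha)^{2}+9\left(1-\frac{\log(e)}{2}\right)(1-2\alpha)^{4}. \]
   Context: $I(\cdot;\cdot)$ denotes mutual information; all logarithms are to base $2$. *)

From HB Require Import structures.
From mathcomp Require Import all_boot all_order all_algebra.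
From mathcomp Require Import all_classical all_reals all_analysis.
Set Implicit Arguments. Unset Strict Implicit. Unset Printing Implicit Defensive.
Import Order.TTheory GRing.Theory Num.Theory.
Local Open Scope ring_scope.

Definition log2 {R : realType} (x : R) : R := ln x / ln 2.

Definition mutual_info {R : realType} {A B : finType} (p : A -> B -> R) : R :=
  let pA := fun a => \sum_(b : B) p a b in
  let pB := fun b => \sum_(a : A) p a b in
  \sum_(a : A) \sum_(b : B)
     (if p a b == 0 then 0 else p a b * log2 (p a b / (pA a * pB b))).

Definition bsc {R : realType} (n : nat) (alpha : R) (x y : n.-tuple bool) : R :=
  \prod_(i < n) (if tnth x i == tnth y i then 1 - alpha else alpha).

Definition unifX {R : realType} (n : nat) (x : n.-tuple bool) : R := (2 ^+ n)^-1.

Definition joint_fX_Y {R : realType} (n : nat) (alpha : R)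
    (f : n.-tuple bool -> bool) (b : bool) (y : n.-tuple bool) : R :=
  \sum_(x : n.-tuple bool | f x == b) unifX x * bsc alpha x y.

Definition balanced (R : realType) (n : nat) (f : n.-tuple bool -> bool) : Prop :=
  \sum_(x : n.-tuple bool | f x == false) (unifX x : R) = 2^-1.

(* Write F = (-1)^f and r = 1 - 2 alpha.  Given Y = y, the bit f(X) equals 0 with
   probability (1 + T_r F (y)) / 2, where T_r is the noise operator of the channel, so for
   balanced f the mutual information is the average over y of phi (T_r F (y)) / ln 2, with
   phi(t) = ((1 + t) ln (1 + t) + (1 - t) ln (1 - t)) / 2.  On [-1, 1] one has
   phi(t) <= t^2 / 2 + (ln 2 - 1/2) t^4, which reduces the claim to two moment bounds:
   E (T_r F)^2 <= r^2 since F has mean zero, and E (T_r F)^4 <= (E (T_s F)^2)^2 <= 9 r^4 by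
   Bonami's (2,4)-hypercontractive inequality with s = sqrt 3 r.  The latter needs s <= 1,
   which is exactly the lower bound on alpha. *)

From mathcomp Require Import all_boot all_order all_algebra.
From mathcomp Require Import all_classical all_reals all_analysis.
From mathcomp Require Import ring lra.
Import Order.TTheory GRing.Theory Num.Theory.
Local Open Scope ring_scope.

Section NoiseOperator.
Set Implicit Arguments. Unset Strict Implicit.
Variable R : realFieldType.
Implicit Types (n : nat) (r s : R).

Lemma sum_tuple0 (F : 0.-tuple bool -> R) : \sum_x F x = F [tuple].
Proof. by rewrite (big_pred1 [tuple]) // => x /=; rewrite [x]tuple0; exact/esym/eqP. Qed.

Lemma sum_tupleS n (F : n.+1.-tuple bool -> R) :
  \sum_x F x = \sum_(x : n.-tuple bool) (F [tuple of true :: x] + F [tuple of false :: x]).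
Proof.
rewrite (reindex (fun p : bool * n.-tuple bool => [tuple of p.1 :: p.2])) /=; last first.
  exists (fun x => (thead x, behead_tuple x)) => [[b x] _ | x _] /=.
    by rewrite theadE; congr pair; apply: val_inj.
  by rewrite -tuple_eta.
rewrite -(pair_big xpredT xpredT (fun b (x : n.-tuple bool) => F [tuple of b :: x])) /=.
by rewrite big_bool big_split.
Qed.

(* [noise_kernel r x y] is P(Y = y | X = x) for a binary symmetric channel with crossover
   probability (1 - r) / 2, and [noise_op r] is the Bonami-Beckner operator T_r. *)
Definition noise_kernel1 r (b c : bool) : R := if b == c then (1 + r) / 2 else (1 - r) / 2.

Definition noise_kernel n r (x y : n.-tuple bool) : R :=
  \prod_(i < n) noise_kernel1 r (tnth x i) (tnth y i).

Lemma noise_kernel0 r (x y : 0.-tuple bool) : noise_kernel r x y = 1.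
Proof. by rewrite /noise_kernel big_ord0. Qed.

Lemma noise_kernelS n r b c (x y : n.-tuple bool) :
  noise_kernel r [tuple of b :: x] [tuple of c :: y] = noise_kernel1 r b c * noise_kernel r x y.
Proof.
rewrite /noise_kernel big_ord_recl !tnth0; congr (_ * _).
by apply: eq_bigr => i _; rewrite !tnthS.
Qed.

Lemma noise_kernelC n r (x y : n.-tuple bool) : noise_kernel r x y = noise_kernel r y x.
Proof. by apply: eq_bigr => i _; rewrite /noise_kernel1 eq_sym. Qed.

Lemma noise_kernel_ge0 n r (x y : n.-tuple bool) : -1 <= r <= 1 -> 0 <= noise_kernel r x y.
Proof.
move=> /andP[rN1 r1]; apply: prodr_ge0 => i _; rewrite /noise_kernel1.
by case: eqP => _; apply: divr_ge0; lra.
Qed.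

Lemma sum_noise_kernel n r (y : n.-tuple bool) : \sum_x noise_kernel r x y = 1.
Proof.
elim: n y => [|n IHn] y; first by rewrite sum_tuple0 noise_kernel0.
rewrite [y]tuple_eta sum_tupleS.
under eq_bigr => x _ do rewrite !noise_kernelS -mulrDl.
by rewrite -mulr_sumr IHn mulr1 /noise_kernel1; case: (thead y) => /=; field.
Qed.

Definition noise_op n r (g : n.-tuple bool -> R) (y : n.-tuple bool) : R :=
  \sum_x noise_kernel r x y * g x.

Definition head_avg n (g : n.+1.-tuple bool -> R) (x : n.-tuple bool) : R :=
  (g [tuple of true :: x] + g [tuple of false :: x]) / 2.

Definition head_diff n (g : n.+1.-tuple bool -> R) (x : n.-tuple bool) : R :=
  (g [tuple of true :: x] - g [tuple of false :: x]) / 2.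

Lemma noise_op0 r (g : 0.-tuple bool -> R) y : noise_op r g y = g [tuple].
Proof. by rewrite /noise_op sum_tuple0 noise_kernel0 mul1r. Qed.

Lemma noise_opS n r (g : n.+1.-tuple bool -> R) c (y : n.-tuple bool) :
  noise_op r g [tuple of c :: y] =
  noise_op r (head_avg g) y + (if c then r else - r) * noise_op r (head_diff g) y.
Proof.
rewrite /noise_op sum_tupleS mulr_sumr -big_split /=; apply: eq_bigr => x _.
by rewrite !noise_kernelS /head_avg /head_diff /noise_kernel1; case: c => /=; field.
Qed.

Lemma sum_tupleS_avg n (g : n.+1.-tuple bool -> R) : \sum_x g x = 2 * \sum_x head_avg g x.
Proof. by rewrite sum_tupleS mulr_sumr; apply: eq_bigr => x _; rewrite /head_avg; field. Qed.

Lemma sum_sqr_tupleS n (g : n.+1.-tuple bool -> R) :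
  \sum_x g x ^+ 2 = 2 * \sum_x head_avg g x ^+ 2 + 2 * \sum_x head_diff g x ^+ 2.
Proof.
rewrite sum_tupleS !mulr_sumr -big_split /=; apply: eq_bigr => x _.
by rewrite /head_avg /head_diff; field.
Qed.

Lemma sum_sqr_noise_opS n r (g : n.+1.-tuple bool -> R) :
  \sum_y noise_op r g y ^+ 2 =
  2 * \sum_y noise_op r (head_avg g) y ^+ 2 + 2 * r ^+ 2 * \sum_y noise_op r (head_diff g) y ^+ 2.
Proof.
rewrite sum_tupleS !mulr_sumr -big_split /=; apply: eq_bigr => y _.
by rewrite !noise_opS /=; ring.
Qed.

Lemma sum_noise_op4S n r (g : n.+1.-tuple bool -> R) :
  \sum_y noise_op r g y ^+ 4 =
  2 * \sum_y noise_op r (head_avg g) y ^+ 4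
  + 12 * r ^+ 2 * \sum_y (noise_op r (head_avg g) y ^+ 2 * noise_op r (head_diff g) y ^+ 2)
  + 2 * r ^+ 4 * \sum_y noise_op r (head_diff g) y ^+ 4.
Proof.
rewrite sum_tupleS !mulr_sumr -!big_split /=; apply: eq_bigr => y _.
by rewrite !noise_opS /=; ring.
Qed.

Lemma sum_sqr_ge0 (I : finType) (u : I -> R) : 0 <= \sum_i u i ^+ 2.
Proof. by apply: sumr_ge0 => i _; apply: sqr_ge0. Qed.

Lemma sum_sqr_noise_op_le n r (g : n.-tuple bool -> R) : r ^+ 2 <= 1 ->
  \sum_y noise_op r g y ^+ 2 <= \sum_y g y ^+ 2.
Proof.
move=> r2_le1; elim: n g => [|n IHn] g; first by rewrite !sum_tuple0 noise_op0.
rewrite sum_sqr_noise_opS sum_sqr_tupleS.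
have := IHn (head_avg g); have := IHn (head_diff g).
have := sum_sqr_ge0 (noise_op r (head_diff g)); nra.
Qed.

Lemma sum_sqr_noise_op_le_mean0 n r (g : n.-tuple bool -> R) : r ^+ 2 <= 1 ->
  \sum_y g y = 0 -> \sum_y noise_op r g y ^+ 2 <= r ^+ 2 * \sum_y g y ^+ 2.
Proof.
move=> r2_le1; elim: n g => [|n IHn] g.
  by rewrite !sum_tuple0 noise_op0 => ->; rewrite expr0n mulr0.
rewrite sum_tupleS_avg sum_sqr_noise_opS sum_sqr_tupleS => sum0.
have avg0 : \sum_x head_avg g x = 0 by lra.
have := IHn (head_avg g) avg0; have := sum_sqr_noise_op_le (head_diff g) r2_le1; nra.
Qed.

Lemma norm_noise_op_le1 n r (g : n.-tuple bool -> R) y : -1 <= r <= 1 ->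
  (forall x, `|g x| <= 1) -> `|noise_op r g y| <= 1.
Proof.
move=> r_bnd g_le1; rewrite -(sum_noise_kernel r y) (le_trans (ler_norm_sum _ _ _)) //.
apply: ler_sum => x _; rewrite normrM ger0_norm ?noise_kernel_ge0 //.
by rewrite ler_piMr ?noise_kernel_ge0.
Qed.

Lemma sqr_sum_mul_le (I : finType) (u v : I -> R) :
  (\sum_i u i * v i) ^+ 2 <= (\sum_i u i ^+ 2) * (\sum_i v i ^+ 2).
Proof.
set a := \sum_i u i ^+ 2; set b := \sum_i v i ^+ 2; set c := \sum_i u i * v i.
have [a0|a_neq0] := eqVneq a 0.
  have u0 i : u i = 0.
    apply/eqP; rewrite -sqrf_eq0; apply/eqP.
    by move/psumr_eq0P: a0 => -> // j _; apply: sqr_ge0.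
  by rewrite /c big1 ?a0 ?expr0n ?mul0r // => i _; rewrite u0 mul0r.
have a_gt0 : 0 < a by rewrite lt_neqAle eq_sym a_neq0 sum_sqr_ge0.
have := sum_sqr_ge0 (fun i => c * u i - a * v i).
have -> : \sum_i (c * u i - a * v i) ^+ 2 = c ^+ 2 * a - 2 * a * c * c + a ^+ 2 * b.
  rewrite (eq_bigr (fun i => c ^+ 2 * u i ^+ 2 - 2 * a * c * (u i * v i) + a ^+ 2 * v i ^+ 2)).
    by rewrite big_split sumrB /= -!mulr_sumr.
  by move=> i _; ring.
nra.
Qed.

Lemma sum_sqr_mul_le (I : finType) (N P Q : R) (a b : I -> R) : 0 <= N -> 0 <= P -> 0 <= Q ->
  N * \sum_i a i ^+ 4 <= P ^+ 2 -> N * \sum_i b i ^+ 4 <= Q ^+ 2 ->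
  N * \sum_i (a i ^+ 2 * b i ^+ 2) <= P * Q.
Proof.
move=> N_ge0 P_ge0 Q_ge0 a4 b4.
set S := \sum_i _.
have S_ge0 : 0 <= S by apply: sumr_ge0 => i _; rewrite mulr_ge0 ?sqr_ge0.
have sum4E (u : I -> R) : \sum_i u i ^+ 4 = \sum_i (u i ^+ 2) ^+ 2.
  by apply: eq_bigr => i _; rewrite -exprM.
have sum4_ge0 (u : I -> R) : 0 <= N * \sum_i u i ^+ 4 by rewrite mulr_ge0 // sum4E sum_sqr_ge0.
have : (N * S) ^+ 2 <= (P * Q) ^+ 2.
  apply: (@le_trans _ _ ((N * \sum_i a i ^+ 4) * (N * \sum_i b i ^+ 4))).
    rewrite mulrACA exprMn -expr2; apply: ler_wpM2l; first exact: sqr_ge0.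
    by rewrite !sum4E; apply: sqr_sum_mul_le.
  by rewrite exprMn ler_pM.
by rewrite ler_pXn2r ?nnegrE ?mulr_ge0.
Qed.

(* Bonami's (2,4)-hypercontractivity ||T_r g||_4 <= ||T_(sqrt 3 r) g||_2, with unnormalised
   sums. *)
Lemma noise_op_hypercontractive n r s (g : n.-tuple bool -> R) : s ^+ 2 = 3 * r ^+ 2 ->
  2 ^+ n * \sum_y noise_op r g y ^+ 4 <= (\sum_y noise_op s g y ^+ 2) ^+ 2.
Proof.
move=> s2E; elim: n g => [|n IHn] g.
  by rewrite !sum_tuple0 !noise_op0 expr0 mul1r -exprM.
rewrite sum_noise_op4S sum_sqr_noise_opS s2E.
set A4 := \sum_y _ ^+ 4; set B4 := \sum_y noise_op r (head_diff g) y ^+ 4.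
set AB := \sum_y _; set P := \sum_y _ ^+ 2; set Q := \sum_y noise_op s (head_diff g) y ^+ 2.
have P_ge0 : 0 <= P := sum_sqr_ge0 _.
have Q_ge0 : 0 <= Q := sum_sqr_ge0 _.
have A4_le : 2 ^+ n * A4 <= P ^+ 2 := IHn (head_avg g).
have B4_le : 2 ^+ n * B4 <= Q ^+ 2 := IHn (head_diff g).
have AB_le : 2 ^+ n * AB <= P * Q by apply: sum_sqr_mul_le; rewrite ?exprn_ge0.
have r4_ge0 : 0 <= r ^+ 4 by rewrite exprn_even_ge0.
have -> : 2 ^+ n.+1 * (2 * A4 + 12 * r ^+ 2 * AB + 2 * r ^+ 4 * B4) =
    4 * (2 ^+ n * A4) + 24 * r ^+ 2 * (2 ^+ n * AB) + 4 * r ^+ 4 * (2 ^+ n * B4).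
  by rewrite exprS; ring.
have -> : (2 * P + 2 * (3 * r ^+ 2) * Q) ^+ 2 =
    4 * P ^+ 2 + 24 * r ^+ 2 * (P * Q) + 36 * r ^+ 4 * Q ^+ 2 by ring.
apply: lerD; first apply: lerD.
- by rewrite ler_pM2l ?ltr0n.
- by apply: ler_wpM2l => //; rewrite mulr_ge0 ?sqr_ge0.
- apply: (le_trans (ler_wpM2l _ B4_le)); first by rewrite mulr_ge0 ?ler0n.
  apply: ler_wpM2r; first exact: sqr_ge0.
  by apply: ler_wpM2r => //; rewrite ler_nat.
Qed.

End NoiseOperator.

Lemma sum_noise_op4_le_mean0 (R : rcfType) n r (g : n.-tuple bool -> R) : 3 * r ^+ 2 <= 1 ->
  \sum_x g x = 0 -> 2 ^+ n * \sum_y noise_op r g y ^+ 4 <= 9 * r ^+ 4 * (\sum_x g x ^+ 2) ^+ 2.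
Proof.
move=> r2_le g0; set s := Num.sqrt (3 * r ^+ 2).
have s2E : s ^+ 2 = 3 * r ^+ 2 by rewrite sqr_sqrtr // mulr_ge0 ?sqr_ge0.
apply: (le_trans (noise_op_hypercontractive g s2E)).
have s2_le1 : s ^+ 2 <= 1 by rewrite s2E.
have := sum_sqr_noise_op_le_mean0 s2_le1 g0; rewrite s2E => T2_le.
rewrite (_ : 9 * r ^+ 4 = (3 * r ^+ 2) ^+ 2); last by ring.
have := sum_sqr_ge0 (noise_op s g); rewrite -exprMn; nra.
Qed.

Section LogBounds.
Set Implicit Arguments. Unset Strict Implicit.
Variable R : realType.
Implicit Types a b s t x : R.

Lemma ger0_is_derive_le (f df : R -> R) a b : a <= b ->
  (forall x, a <= x <= b -> is_derive x 1 f (df x)) ->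
  (forall x, a <= x <= b -> 0 <= df x) -> f a <= f b.
Proof.
move=> ab f_df df_ge0.
have [c cab fba] : exists2 c, c \in `[a, b] & f b - f a = df c * (b - a).
  apply: MVT_segment => // [x|].
    by rewrite in_itv /= => /andP[ax xb]; apply: f_df; rewrite !ltW.
  apply: derivable_within_continuous => x; rewrite in_itv /= => /f_df.
  by case.
by rewrite -subr_ge0 fba mulr_ge0 ?subr_ge0 // df_ge0.
Qed.

Lemma ler0_is_derive_le (f df : R -> R) a b : a <= b ->
  (forall x, a <= x <= b -> is_derive x 1 f (df x)) ->
  (forall x, a <= x <= b -> df x <= 0) -> f b <= f a.
Proof.
move=> ab f_df df_le0; rewrite -lerN2.
apply: (@ger0_is_derive_le (fun x => - f x) (fun x => - df x) a b) => // x.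
  by move=> /f_df ?; apply: is_deriveN.
by move=> /df_le0; rewrite oppr_ge0.
Qed.

Section OneSignChange.
Variables (D D1 D2 : R -> R) (a b : R).
Hypotheses (D_D1 : forall x, a <= x <= b -> is_derive x 1 D (D1 x))
  (D1_D2 : forall x, a <= x <= b -> is_derive x 1 D1 (D2 x))
  (D2_sign : forall s u, a <= s -> s <= u -> u <= b -> D2 s < 0 -> D2 u <= 0)
  (Da : D a = 0) (Db : D b = 0) (D1a : D1 a = 0).

Lemma ge0_one_sign_change t : a <= t <= b -> 0 <= D t.
Proof.
move=> /andP[a_le_t t_le_b].
have [D1_ge0 | /existsNP[s /not_implyP[/andP[a_le_s s_le_t] /negP]]] :=
  pselect (forall s, a <= s <= t -> 0 <= D1 s).
  rewrite -Da; apply: (ger0_is_derive_le (df := D1) a_le_t) => // x /andP[ax xt].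
  by apply: D_D1; rewrite ax (le_trans xt).
rewrite -ltNge => D1s_lt0.
have [[s' /andP[a_le_s' s'_le_s] D2s'_lt0] | D2_ge0] :=
    pselect (exists2 s', a <= s' <= s & D2 s' < 0); last first.
  move: D1s_lt0; rewrite ltNge -D1a => /negP; case.
  apply: (ger0_is_derive_le (df := D2) a_le_s) => x /andP[ax xs].
    by apply: D1_D2; rewrite ax (le_trans xs) // (le_trans s_le_t).
  by rewrite leNgt; apply/negP => D2x; apply: D2_ge0; exists x; rewrite ?ax.
rewrite -Db; apply: (ler0_is_derive_le (df := D1) t_le_b) => x /andP[tx xb].
  by apply: D_D1; rewrite xb (le_trans a_le_t).
have sx : s <= x := le_trans s_le_t tx.
apply: ltW; apply: le_lt_trans D1s_lt0.
apply: (ler0_is_derive_le (df := D2) sx) => y /andP[sy yx].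
  by apply: D1_D2; rewrite (le_trans a_le_s) //= (le_trans yx).
by apply: (D2_sign a_le_s' (le_trans s'_le_s sy)) => //; rewrite (le_trans yx).
Qed.

End OneSignChange.

Lemma is_derive_ln1D x : -1 < x -> is_derive x 1 (fun y => ln (1 + y)) (1 + x)^-1.
Proof.
move=> x_gtN1; have x1_gt0 : 0 < 1 + x by lra.
rewrite -[_^-1]mulr1; apply: (is_derive1_comp (g := fun y => 1 + y) (is_derive1_ln x1_gt0)).
by apply: is_derive_eq; rewrite add0r mulr1.
Qed.

Lemma is_derive_ln1B x : x < 1 -> is_derive x 1 (fun y => ln (1 - y)) (- (1 - x)^-1).
Proof.
move=> x_lt1; have x1_gt0 : 0 < 1 - x by lra.
rewrite -mulrN1; apply: (is_derive1_comp (g := fun y => 1 - y) (is_derive1_ln x1_gt0)).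
by apply: is_derive_eq; rewrite add0r mul1r.
Qed.

Lemma ln1B_le t : 0 <= t < 1 -> ln (1 - t) <= - (t + t ^+ 2 / 2 + t ^+ 3 / 3 + t ^+ 4 / 4).
Proof.
move=> /andP[t_ge0 t_lt1].
pose g (y : R) := - (y + y ^+ 2 / 2 + y ^+ 3 / 3 + y ^+ 4 / 4) - ln (1 - y).
suff : g 0 <= g t by rewrite /g !expr0n /= subr0 ln1; lra.
have lt1 x : x <= t -> x < 1 by move=> x_le_t; apply: le_lt_trans t_lt1.
apply: (ger0_is_derive_le (df := fun y => y ^+ 4 / (1 - y)) t_ge0) => x /andP[x_ge0 /lt1 x_lt1].
  have := is_derive_ln1B x_lt1 => ?.
  apply: is_derive_eq; rewrite !scaler0 !add0r /GRing.scale /=.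
  by field; rewrite subr_eq0 gt_eqF.
by rewrite divr_ge0 ?exprn_ge0 // subr_ge0 ltW.
Qed.

Lemma ln2_le : ln (2 : R) <= 3 / 4.
Proof.
rewrite -[X in _ <= X]expRK ler_ln ?posrE ?expR_gt0 //.
rewrite (_ : 3 / 4 = 8^-1 * 6%:R); last by field.
rewrite expRM_natr (@le_trans _ _ ((1 + 8^-1) ^+ 6)) //.
  by rewrite !exprS expr0; lra.
by rewrite lerXn2r ?nnegrE ?expR_ge1Dx ?expR_ge0 //; lra.
Qed.

Lemma ln2_ge : 2^-1 <= ln (2 : R).
Proof.
rewrite -[X in X <= _]expRK ler_ln ?posrE ?expR_gt0 //.
rewrite -[X in expR X]opprK expRN -[X in _ <= X]invrK lef_pV2 ?posrE ?expR_gt0 //.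
by rewrite (le_trans _ (expR_ge1Dx _)) //; lra.
Qed.

(* The right-hand side is the cubic Taylor polynomial of (1 + t) ln (1 + t) plus a t^5 term
   that cancels against [ln1B_le] in [kl_bern_half_le_ge0] and a t^4 term making it exact at
   t = 1.  The gap D has D'' = t^2 q(t) / (1 + t) with q decreasing, so D is convex then
   concave, and D(0) = D'(0) = D(1) = 0. *)
Lemma xln1D_le t : 0 <= t <= 1 -> (1 + t) * ln (1 + t) <=
  t + t ^+ 2 / 2 - t ^+ 3 / 6 + (2 * ln 2 - 13 / 12) * t ^+ 4 - t ^+ 5 / 4.
Proof.
move=> t01; set beta := 2 * ln 2 - 13 / 12.
pose D y := y + y ^+ 2 / 2 - y ^+ 3 / 6 + beta * y ^+ 4 - y ^+ 5 / 4 - (1 + y) * ln (1 + y).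
pose D1 y := y - y ^+ 2 / 2 + 4 * beta * y ^+ 3 - 5 * y ^+ 4 / 4 - ln (1 + y).
pose q y := (12 * beta - 1) + (12 * beta - 5) * y - 5 * y ^+ 2.
pose D2 y := y ^+ 2 * q y / (1 + y).
suff : 0 <= D t by rewrite /D subr_ge0.
have beta_le : 12 * beta - 5 <= 0 by have := ln2_le; rewrite /beta; lra.
have q_nonincr s u : 0 <= s -> s <= u -> q u <= q s by rewrite /q; nra.
apply: (@ge0_one_sign_change D D1 D2 0 1) => [x /andP[x_ge0 _]|x /andP[x_ge0 _]| | | | |//];
  rewrite ?/D ?/D1 ?/D2.
- have x1_gt0 : 0 < 1 + x by lra.
  have := is_derive_ln1D (lt_le_trans (ltrN10 R) x_ge0) => ?.
  apply: is_derive_eq; rewrite !scaler0 !add0r /GRing.scale /=.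
  by field; rewrite lt0r_neq0.
- have x1_gt0 : 0 < 1 + x by lra.
  have := is_derive_ln1D (lt_le_trans (ltrN10 R) x_ge0) => ?.
  apply: is_derive_eq; rewrite !scaler0 !add0r /GRing.scale /=.
  by rewrite /q; field; rewrite lt0r_neq0.
- move=> s u s_ge0 s_le_u u_le1 D2s_lt0.
  have qs_lt0 : q s < 0.
    rewrite ltNge; apply/negP => qs_ge0; move: D2s_lt0; rewrite ltNge divr_ge0 //.
      by rewrite mulr_ge0 ?sqr_ge0.
    lra.
  rewrite mulr_le0_ge0 ?invr_ge0 //; last by lra.
  by rewrite mulr_ge0_le0 ?sqr_ge0 // (le_trans (q_nonincr _ _ s_ge0 s_le_u)) ?ltW.
- by rewrite addr0 ln1; ring.
- by rewrite (_ : 1 + 1 = 2 :> R) // /beta; field.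
- by rewrite addr0 ln1; ring.
Qed.

(* The Kullback-Leibler divergence of Bern((1 + t) / 2) from Bern(1/2), in nats. *)
Definition kl_bern_half t := ((1 + t) * ln (1 + t) + (1 - t) * ln (1 - t)) / 2.

Lemma kl_bern_halfN t : kl_bern_half (- t) = kl_bern_half t.
Proof. by rewrite /kl_bern_half opprK addrC. Qed.

Lemma kl_bern_half_le_ge0 t : 0 <= t <= 1 ->
  kl_bern_half t <= t ^+ 2 / 2 + (ln 2 - 2^-1) * t ^+ 4.
Proof.
move=> /[dup] t01 /andP[t_ge0 t_le1].
have up := xln1D_le t01.
have down : (1 - t) * ln (1 - t) <= - ((1 - t) * (t + t ^+ 2 / 2 + t ^+ 3 / 3 + t ^+ 4 / 4)).
  have [->|t_neq1] := eqVneq t 1; first by rewrite subrr !mul0r oppr0.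
  by rewrite -mulrN ler_wpM2l ?subr_ge0 // ln1B_le // t_ge0 lt_neqAle t_neq1.
have -> : t ^+ 2 / 2 + (ln 2 - 2^-1) * t ^+ 4 =
   (t + t ^+ 2 / 2 - t ^+ 3 / 6 + (2 * ln 2 - 13 / 12) * t ^+ 4 - t ^+ 5 / 4
    - (1 - t) * (t + t ^+ 2 / 2 + t ^+ 3 / 3 + t ^+ 4 / 4)) / 2 by field.
by rewrite /kl_bern_half ler_pM2r //; lra.
Qed.

Lemma kl_bern_half_le t : -1 <= t <= 1 ->
  kl_bern_half t <= t ^+ 2 / 2 + (ln 2 - 2^-1) * t ^+ 4.
Proof.
move=> /andP[tN1 t1]; have [t_ge0|t_lt0] := leP 0 t.
  by rewrite kl_bern_half_le_ge0 // t_ge0.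
rewrite -kl_bern_halfN -sqrrN (_ : t ^+ 4 = (- t) ^+ 4); last by ring.
by rewrite kl_bern_half_le_ge0 //; lra.
Qed.

Lemma kl_bern_halfE a b : a + b = 1 ->
  a * ln (2 * a) + b * ln (2 * b) = kl_bern_half (b - a).
Proof.
move=> abE; rewrite /kl_bern_half.
have -> : 1 + (b - a) = 2 * b by lra.
have -> : 1 - (b - a) = 2 * a by lra.
by field.
Qed.

End LogBounds.

Lemma sum_kl_bern_half_noise_op_le (R : realType) n r (g : n.-tuple bool -> R) :
  3 * r ^+ 2 <= 1 -> (forall x, `|g x| = 1) -> \sum_x g x = 0 ->
  \sum_y kl_bern_half (noise_op r g y) <= 2 ^+ n * (r ^+ 2 / 2 + 9 * (ln 2 - 2^-1) * r ^+ 4).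
Proof.
move=> r2_le g1 g0.
have r2_le1 : r ^+ 2 <= 1 by have := sqr_ge0 r; lra.
have two_n_gt0 : (0 : R) < 2 ^+ n by rewrite exprn_gt0.
have g2 : \sum_x g x ^+ 2 = 2 ^+ n.
  rewrite (eq_bigr (fun=> 1)) => [|x _]; last by apply/eqP; rewrite sqr_norm_eq1 g1.
  by rewrite sumr_const card_tuple card_bool natrX.
have T2_le := sum_sqr_noise_op_le_mean0 r2_le1 g0; rewrite g2 in T2_le.
have T4_le : \sum_y noise_op r g y ^+ 4 <= 2 ^+ n * (9 * r ^+ 4).
  rewrite -(ler_pM2l two_n_gt0) (le_trans (sum_noise_op4_le_mean0 r2_le g0)) // g2.
  by rewrite le_eqVlt; apply/predU1l; ring.
have c_ge0 : 0 <= ln (2 : R) - 2^-1 by rewrite subr_ge0 ln2_ge.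
apply: (@le_trans _ _ (\sum_y (noise_op r g y ^+ 2 / 2 + (ln 2 - 2^-1) * noise_op r g y ^+ 4))).
  apply: ler_sum => y _; apply: kl_bern_half_le; rewrite -ler_norml.
  apply: norm_noise_op_le1 => [|x]; last by rewrite g1.
  by apply/andP; split; nra.
rewrite big_split /= -mulr_suml -mulr_sumr.
have := ler_wpM2l c_ge0 T4_le; lra.
Qed.

Section BinarySymmetricChannel.
Set Implicit Arguments. Unset Strict Implicit.
Variables (R : realType) (n : nat) (f : n.-tuple bool -> bool).
Implicit Types (x y : n.-tuple bool) (b : bool).

Definition sign_of (x : n.-tuple bool) : R := if f x then -1 else 1.

Lemma norm_sign_of x : `|sign_of x| = 1.
Proof. by rewrite /sign_of; case: (f x); rewrite ?normrN normr1. Qed.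

Lemma sum_fibers (F : n.-tuple bool -> R) : \sum_x F x = \sum_b \sum_(x | f x == b) F x.
Proof. exact: partition_big. Qed.

Lemma balanced_fibers : balanced R f -> forall b, \sum_(x | f x == b) (1 : R) = 2 ^+ n / 2.
Proof.
have two_n_gt0 : (0 : R) < 2 ^+ n by rewrite exprn_gt0.
move=> bal; have false_fiber : \sum_(x | f x == false) (1 : R) = 2 ^+ n / 2.
  have bal' : \sum_(x | f x == false) (2 ^+ n)^-1 = 2^-1 :> R := bal.
  by rewrite -[LHS](mulVKf (lt0r_neq0 two_n_gt0)) mulr_sumr mulr1 bal'.
case=> //; have := sum_fibers (fun=> 1); rewrite big_bool /= false_fiber.
by rewrite sumr_const card_tuple card_bool natrX; lra.
Qed.

Lemma sum_sign_of : balanced R f -> \sum_x sign_of x = 0.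
Proof.
move=> /balanced_fibers fiber; rewrite sum_fibers big_bool /=.
rewrite (eq_bigr (fun=> -1)) => [|x /eqP]; last by rewrite /sign_of => ->.
rewrite [X in _ + X](eq_bigr (fun=> 1)) => [|x /eqP]; last by rewrite /sign_of => ->.
by rewrite sumrN !fiber addNr.
Qed.

Variable alpha : R.
Local Notation r := (1 - 2 * alpha).

Lemma bsc_noise_kernel x y : bsc alpha x y = noise_kernel r x y.
Proof. by apply: eq_bigr => i _; rewrite /noise_kernel1; case: eqP => _; field. Qed.

Lemma joint_fX_YE b y :
  joint_fX_Y alpha f b y = (2 ^+ n)^-1 * \sum_(x | f x == b) noise_kernel r x y.
Proof. by rewrite /joint_fX_Y mulr_sumr; apply: eq_bigr => x _; rewrite bsc_noise_kernel. Qed.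

Lemma sum_joint_fX_Y_fX y : \sum_b joint_fX_Y alpha f b y = (2 ^+ n)^-1.
Proof.
under eq_bigr do rewrite joint_fX_YE.
by rewrite -mulr_sumr -sum_fibers sum_noise_kernel mulr1.
Qed.

Lemma sum_joint_fX_Y_Y b : \sum_y joint_fX_Y alpha f b y = \sum_(x | f x == b) (2 ^+ n)^-1.
Proof.
under eq_bigr do rewrite joint_fX_YE.
rewrite -mulr_sumr exchange_big mulr_sumr /=; apply: eq_bigr => x _.
by under eq_bigr do rewrite noise_kernelC; rewrite sum_noise_kernel mulr1.
Qed.

Lemma noise_op_sign_of y : noise_op r sign_of y =
  \sum_(x | f x == false) noise_kernel r x y - \sum_(x | f x == true) noise_kernel r x y.
Proof.
rewrite /noise_op sum_fibers big_bool /= addrC -sumrN.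
by congr (_ + _); apply: eq_bigr => x /eqP fx; rewrite /sign_of fx ?mulrN1 ?mulr1.
Qed.

Lemma mutual_info_balanced : balanced R f ->
  mutual_info (joint_fX_Y alpha f) =
  (2 ^+ n)^-1 / ln 2 * \sum_y kl_bern_half (noise_op r sign_of y).
Proof.
move=> /balanced_fibers fiber; set u : R := (2 ^+ n)^-1.
have u_gt0 : 0 < u by rewrite invr_gt0 exprn_gt0.
have marg_fX b : \sum_y joint_fX_Y alpha f b y = 2^-1.
  rewrite sum_joint_fX_Y_Y -[(2 ^+ n)^-1]mulr1 -mulr_sumr fiber.
  by field; rewrite expf_neq0 ?pnatr_eq0.
have termE q : (if u * q == 0 then 0 else u * q * log2 (u * q / (2^-1 * u))) =
    u / ln 2 * (q * ln (2 * q)).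
  have [->|q_neq0] := eqVneq q 0; first by rewrite mulr0 eqxx !mul0r mulr0.
  rewrite mulf_eq0 (gt_eqF u_gt0) (negPf q_neq0) /log2.
  by rewrite (_ : u * q / (2^-1 * u) = 2 * q); [ring | field; rewrite gt_eqF].
rewrite /mutual_info; under eq_bigr => b _ do
  under eq_bigr => y _ do rewrite marg_fX sum_joint_fX_Y_fX joint_fX_YE termE.
rewrite exchange_big /=; under eq_bigr do rewrite -mulr_sumr.
rewrite -mulr_sumr; congr (_ * _); apply: eq_bigr => y _.
rewrite big_bool /= noise_op_sign_of kl_bern_halfE //.
by have := sum_noise_kernel r y; rewrite sum_fibers big_bool.
Qed.

End BinarySymmetricChannel.

Theorem theorem1 (R : realType) (n : nat) (f : n.-tuple bool -> bool) (alpha : R) :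
  (1 <= n)%N ->
  @balanced R n f ->
  2^-1 * (1 - (Num.sqrt 3)^-1) <= alpha -> alpha <= 2^-1 ->
  mutual_info (joint_fX_Y alpha f) <=
    log2 (expR 1) / 2 * (1 - 2 * alpha) ^+ 2
    + 9 * (1 - log2 (expR 1) / 2) * (1 - 2 * alpha) ^+ 4.
Proof.
(* [1 <= n] is implied by [balanced]. *)
move=> _ bal alpha_ge alpha_le.
have r2_le : 3 * (1 - 2 * alpha) ^+ 2 <= 1.
  have sqrt3_gt0 : 0 < Num.sqrt (3 : R) by rewrite sqrtr_gt0 ltr0n.
  have r_sqrt3_le1 : (1 - 2 * alpha) * Num.sqrt 3 <= 1.
    by rewrite -ler_pdivlMr // div1r; lra.
  rewrite -[3](@sqr_sqrtr R) ?ler0n // -exprMn mulrC exprn_ile1 // mulr_ge0 ?sqrtr_ge0 //; lra.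
have ln2_gt0 : 0 < ln (2 : R) by rewrite ln_gt0 // ltr1n.
rewrite mutual_info_balanced //.
have := sum_kl_bern_half_noise_op_le r2_le (@norm_sign_of _ _ f) (sum_sign_of bal).
move=> /(ler_wpM2l (_ : 0 <= (2 ^+ n)^-1 / ln 2)) /le_trans; apply.
  by rewrite divr_ge0 ?invr_ge0 ?exprn_ge0 // ltW.
rewrite /log2 expRK le_eqVlt; apply/predU1l.
by field; rewrite (lt0r_neq0 ln2_gt0) expf_neq0 // pnatr_eq0.
Qed.
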